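(* Let $M$ be a finitely generated $R$-module with $n={\rm rk}(M)$. Let $U$ be an additive subgroup of $M$ with $e(U)=e<\infty$ and $r_{M,U}=ne-{\rm rk}_e(U)>0$, let $b>0$ be an integer, and let $r'$ be a nonnegative integer with $r'<r_{M,U}\,b$. Then there exists a sequence $(U_m)$ of additive subgroups with $U\subset U_m\subset M$, $U_m\ne U$, $e(U_m)=eb$, $U_m\to U$ (in the space of subsets of $M$), and $r_{M,U_m}=r'$.
   Context: $R=\mathbb{F}_p[x,x^{-1}]$, $p$ prime. For an additive subgroup $U$ of an $R$-module, $e(U)$ is the minimal positive integer $e$ with $x^eU=U$, and $+\infty$ if none exists. The rank ${\rm rk}(M)$ of a finitely generated $R$-module is the maximal number of elements freely generating a free submodule ($0$ if none). If $x^mU=U$, ${\rm rk}_m(U)$ is the rank of $U$ regarded as an $R$-module via $x\ast u=x^mu$. For $U$ with $e=e(U)<\infty$, $r_{M,U}=\,{\rm rk}(M)\,e-{\rm rk}_e(U)$. Convergence of subsets $U_m\to U$ of $M$ means pointwise convergence of indicator functions. *)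

(* An R-module, R = F_p[x,x^-1], is encoded as an abelian
   group M with p*M = 0 together with the additive automorphism sigma = (x * _)
   and its inverse tau = (x^-1 * _). *)
From mathcomp Require Import all_boot all_order all_algebra.
Set Implicit Arguments. Unset Strict Implicit. Unset Printing Implicit Defensive.
Import GRing.Theory.
Local Open Scope ring_scope.

(* A Laurent polynomial over F_p represented as x^{-N} * q(x), a pair (N, q);
   it is zero iff q = 0. *)
Definition laurent (p : nat) := (nat * {poly 'F_p})%type.

Section Defs.
Variables (p : nat) (M : zmodType).

Definition lact (s t : M -> M) (c : laurent p) (v : M) : M :=
  iter c.1 t (\sum_(i < size c.2) (iter i s v) *+ nat_of_ord (c.2)`_i).

Definition lindep (s t : M -> M) (k : nat) (g : 'I_k -> M) : Prop :=
  forall c : 'I_k -> laurent p,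
    \sum_(i < k) lact s t (c i) (g i) = 0 -> forall i, (c i).2 = 0.

Definition has_rank (s t : M -> M) (S : M -> Prop) (r : nat) : Prop :=
  (exists g : 'I_r -> M, (forall i, S (g i)) /\ lindep s t g) /\
  (forall k (g : 'I_k -> M), (forall i, S (g i)) -> lindep s t g -> (k <= r)%N).

Definition fin_gen (s t : M -> M) : Prop :=
  exists k (g : 'I_k -> M), forall m : M,
    exists c : 'I_k -> laurent p, m = \sum_(i < k) lact s t (c i) (g i).

Definition add_subgroup (U : M -> Prop) : Prop :=
  U 0 /\ (forall a b, U a -> U b -> U (a + b)) /\ (forall a, U a -> U (- a)).

Definition img_eq (f : M -> M) (U : M -> Prop) : Prop :=
  (forall u, U u -> U (f u)) /\ (forall m, U m -> exists u, U u /\ f u = m).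

Definition is_e (s : M -> M) (U : M -> Prop) (e : nat) : Prop :=
  (0 < e)%N /\ img_eq (iter e s) U /\
  (forall e', (0 < e')%N -> (e' < e)%N -> ~ img_eq (iter e' s) U).

(* pointwise convergence of indicator functions *)
Definition set_cvg (Us : nat -> M -> Prop) (U : M -> Prop) : Prop :=
  forall v, exists N, forall m, (N <= m)%N -> (Us m v <-> U v).

End Defs.

From mathcomp Require Import all_boot all_order all_algebra.
From mathcomp Require Import ring zify.
From Stdlib Require Import Classical FunctionalExtensionality.
Set Implicit Arguments. Unset Strict Implicit. Unset Printing Implicit Defensive.
Import GRing.Theory.
Local Open Scope ring_scope.

(* Put y = x^e and z = x^(eb).  Take a y-free family g of rank rU in U and a vector v
   keeping (g, v) y-free (possible as rU < ne); the shifts y^j g_i, y^j v (j < b) form a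
   z-free family, which is completed by further z-free vectors E.  With O = (y^j v)_j, E,
   let U_m be the z-saturation of U + sum_o F_p[z] w_m(o) O_o, where w_m(o) is
   (z - 1)^(m + d_o) or 0, chosen so that the z-rank of U_m is neb - r'.  U_m is
   z-stable, and not y^j-stable for 0 < j < b because d_o jumps between v and y^j v.
   As the exponents grow, every point outside U eventually leaves U_m: this gives
   U_m -> U and, after dropping finitely many m, excludes every period e' < eb that
   does not stabilise U, whence e(U_m) = eb. *)

Lemma left_kernel_neq0 (R : idomainType) k l (A : 'M[R]_(k, l)) :
  (l < k)%N -> exists2 w : 'rV[R]_k, w != 0 & w *m A = 0.
Proof.
elim: l k A => [|l IH] k A lt_lk.
  exists (const_mx 1); last by apply/matrixP => ? [].
  apply/eqP => /matrixP /(_ 0 (Ordinal lt_lk)); rewrite !mxE => /eqP.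
  by rewrite oner_eq0.
have [i0 Ai0|col0] := pickP (fun i => A i ord0 != 0); last first.
  have [w w_neq0 wA] := IH k (\matrix_(i, c) A i (lift ord0 c)) (ltnW lt_lk).
  exists w => //; apply/matrixP => x c; rewrite (ord1 x) !mxE.
  case: (unliftP ord0 c) => [c'|] ->.
    have := congr1 (fun N : 'M[R]_(1, l) => N 0 c') wA; rewrite !mxE => wAc.
    rewrite -[RHS]wAc.
    by apply: eq_bigr => i _; rewrite mxE.
  by apply: big1 => i _; move/negbFE/eqP: (col0 i) ->; rewrite mulr0.
move: A lt_lk i0 Ai0; case: k => [|k] A lt_lk i0 Ai0; first by case: i0 Ai0.
(* eliminate the first column using the pivot row i0 *)
set a := A i0 ord0 in Ai0.
pose B : 'M[R]_(k, l) := \matrix_(j, c)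
  (a * A (lift i0 j) (lift ord0 c) - A (lift i0 j) ord0 * A i0 (lift ord0 c)).
have [w' w'_neq0 w'B] := IH k B lt_lk.
pose w : 'rV[R]_k.+1 := \row_i
  if unlift i0 i is Some j then a * w' 0 j else - \sum_j w' 0 j * A (lift i0 j) ord0.
exists w.
  apply: contra w'_neq0 => /eqP w0; apply/eqP/matrixP => x j; rewrite (ord1 x) mxE.
  have := congr1 (fun N : 'rV[R]_k.+1 => N 0 (lift i0 j)) w0; rewrite !mxE liftK => /eqP.
  by rewrite mulf_eq0 (negbTE Ai0) => /eqP.
apply/matrixP => x c; rewrite !mxE (bigD1_ord i0) //= !mxE unlift_none.
under eq_bigr => j _ do rewrite !mxE liftK.
rewrite mulNr mulr_suml -sumrN -big_split /=.
case: (unliftP ord0 c) => [c'|] ->; last by apply: big1 => j _; rewrite /a; ring.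
have := congr1 (fun N : 'M[R]_(1, l) => N 0 c') w'B; rewrite !mxE => w'Bc.
rewrite -[RHS]w'Bc.
by apply: eq_bigr => j _; rewrite mxE; ring.
Qed.

Section AdditiveMaps.
Variable M : zmodType.
Implicit Types (f g : M -> M).

Lemma morphD_0 f : {morph f : x y / x + y} -> f 0 = 0.
Proof. by move=> fD; apply: (@addrI _ (f 0)); rewrite -fD !addr0. Qed.

Lemma morphD_N f : {morph f : x y / x + y} -> {morph f : x / - x}.
Proof. by move=> fD x; apply: (@addrI _ (f x)); rewrite -fD !subrr morphD_0. Qed.

Lemma morphD_Mn f : {morph f : x y / x + y} -> forall n, {morph f : x / x *+ n}.
Proof. by move=> fD n x; elim: n => [|n IH]; rewrite ?mulr0n ?morphD_0 // !mulrS fD IH. Qed.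

Lemma morphD_sum f : {morph f : x y / x + y} ->
  forall (I : finType) (F : I -> M), f (\sum_i F i) = \sum_i f (F i).
Proof.
move=> fD I F; apply: (big_rec2 (fun x y => f y = x)); first exact: morphD_0.
by move=> i a b _ <-; rewrite fD.
Qed.

Lemma morphD_iter f : {morph f : x y / x + y} -> forall n, {morph iter n f : x y / x + y}.
Proof. by move=> fD; elim=> [|n IH] x y //=; rewrite IH fD. Qed.

Lemma commute_iter f g : (forall x, f (g x) = g (f x)) ->
  forall n x, f (iter n g x) = iter n g (f x).
Proof. by move=> fg; elim=> [|n IH] x //=; rewrite fg IH. Qed.

Lemma iter_cancel f g : cancel f g -> forall n, cancel (iter n f) (iter n g).
Proof. by move=> fK; elim=> [|n IH] x //; rewrite [iter n.+1 g _]iterSr /= fK IH. Qed.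

End AdditiveMaps.

Section PolynomialAction.
Variables (p : nat) (M : zmodType).
Hypothesis p_prime : prime p.
Hypothesis pM0 : forall v : M, v *+ p = 0.
Local Notation P := {poly 'F_p}.

Lemma mulrn_modp (v : M) n : v *+ (n %% p) = v *+ n.
Proof. by rewrite {2}(divn_eq n p) mulrnDr mulnC mulrnA pM0 mul0rn add0r. Qed.

Lemma mulrn_FpD (k1 k2 : 'F_p) (v : M) : v *+ (k1 + k2)%R = v *+ k1 + v *+ k2.
Proof.
have -> : nat_of_ord (k1 + k2)%R = ((k1 + k2) %% p)%N := congr1 (modn _) (Fp_cast p_prime).
by rewrite mulrn_modp mulrnDr.
Qed.

Lemma mulrn_FpM (k1 k2 : 'F_p) (v : M) : v *+ (k1 * k2)%R = v *+ k2 *+ k1.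
Proof.
have -> : nat_of_ord (k1 * k2)%R = ((k1 * k2) %% p)%N := congr1 (modn _) (Fp_cast p_prime).
by rewrite mulrn_modp mulnC mulrnA.
Qed.

Definition pact (a : M -> M) (c : P) (v : M) : M :=
  \sum_(i < size c) iter i a v *+ nat_of_ord c`_i.

Lemma lactE (s t : M -> M) (c : laurent p) v : lact s t c v = iter c.1 t (pact s c.2 v).
Proof. by []. Qed.

Section OneMap.
Variable a : M -> M.
Hypothesis aD : {morph a : x y / x + y}.

Lemma pact_widen n (c : P) v :
  (size c <= n)%N -> pact a c v = \sum_(i < n) iter i a v *+ nat_of_ord c`_i.
Proof.
move=> le_cn; rewrite /pact (big_ord_widen n (fun i => iter i a v *+ nat_of_ord c`_i) le_cn).
rewrite big_mkcond; apply: eq_bigr => i _; case: ifP => // /negbT.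
by rewrite -leqNgt => /(nth_default 0) ->.
Qed.

Lemma pact0 v : pact a 0 v = 0.
Proof. by rewrite /pact size_poly0 big_ord0. Qed.

Lemma pactD (c1 c2 : P) v : pact a (c1 + c2) v = pact a c1 v + pact a c2 v.
Proof.
rewrite !(@pact_widen (maxn (size c1) (size c2))) ?leq_maxl ?leq_maxr ?size_polyD //.
by rewrite -big_split; apply: eq_bigr => i _; rewrite coefD mulrn_FpD.
Qed.

Lemma pactC k v : pact a k%:P v = v *+ nat_of_ord k.
Proof. by rewrite (@pact_widen 1) ?size_polyC_leq1 // big_ord1 coefC. Qed.

Lemma pact_morphD (c : P) : {morph pact a c : x y / x + y}.
Proof.
move=> x y; rewrite /pact -big_split; apply: eq_bigr => i _.
by rewrite (morphD_iter aD) mulrnDl.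
Qed.

Lemma pact_commute (f : M -> M) (c : P) v : {morph f : x y / x + y} ->
  (forall x, f (a x) = a (f x)) -> f (pact a c v) = pact a c (f v).
Proof.
move=> fD fa; rewrite /pact (morphD_sum fD); apply: eq_bigr => i _.
by rewrite morphD_Mn // commute_iter.
Qed.

Lemma pactMX (c : P) v : pact a (c * 'X) v = a (pact a c v).
Proof.
rewrite (@pact_widen (size c).+1); last first.
  by apply: leq_trans (size_polyMleq _ _) _; rewrite size_polyX addn2.
rewrite big_ord_recl coefMX eqxx mulr0n add0r /pact (morphD_sum aD).
by apply: eq_bigr => i _; rewrite coefMX /= morphD_Mn.
Qed.

Lemma pactZ k (c : P) v : pact a (k%:P * c) v = pact a c v *+ nat_of_ord k.
Proof.
rewrite mul_polyC (@pact_widen (size c)) ?size_scale_leq // /pact.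
rewrite -sumrMnl.
by apply: eq_bigr => i _; rewrite coefZ mulrn_FpM.
Qed.

Lemma pactM (c1 c2 : P) v : pact a (c1 * c2) v = pact a c1 (pact a c2 v).
Proof.
elim/poly_ind: c1 => [|q k IH]; first by rewrite mul0r !pact0.
by rewrite mulrDl mulrAC pactD pactMX IH pactZ pactD pactMX pactC.
Qed.

Lemma pact1 v : pact a 1 v = v.
Proof. by rewrite -polyC1 pactC. Qed.

Lemma pactXn n v : pact a 'X^n v = iter n a v.
Proof.
elim: n v => [|n IH] v; first by rewrite expr0 pact1.
by rewrite exprSr pactMX IH.
Qed.

Lemma iter_pact (c : P) n v : iter n a (pact a c v) = pact a (c * 'X^n) v.
Proof. by rewrite mulrC pactM pactXn. Qed.

Lemma pactN (c : P) v : pact a (- c) v = - pact a c v.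
Proof. by apply: (@addrI _ (pact a c v)); rewrite -pactD !subrr pact0. Qed.

Lemma pactB (c1 c2 : P) v : pact a (c1 - c2) v = pact a c1 v - pact a c2 v.
Proof. by rewrite pactD pactN. Qed.

Lemma pact_sum (I : finType) (c : I -> P) v :
  pact a (\sum_i c i) v = \sum_i pact a (c i) v.
Proof.
apply: (big_rec2 (fun x y => pact a y v = x)); first exact: pact0.
by move=> i x y _ <-; rewrite pactD.
Qed.

Lemma pactv_sum (c : P) (I : finType) (F : I -> M) :
  pact a c (\sum_i F i) = \sum_i pact a c (F i).
Proof. exact: (morphD_sum (pact_morphD c)). Qed.

End OneMap.

Lemma pact_comp_Xn (a : M -> M) b (c : P) v : {morph a : x y / x + y} ->
  pact a (c \Po 'X^b) v = pact (iter b a) c v.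
Proof.
move=> aD; have abD := morphD_iter aD b.
elim/poly_ind: c v => [|q k IH] v; first by rewrite comp_poly0 !pact0.
rewrite comp_polyD comp_polyM comp_polyX comp_polyC.
rewrite pactD // pactM // pactXn // IH pactC pactD // pactMX // ?pactC //.
by congr (_ + _); rewrite (pact_commute (a := iter b a)).
Qed.

End PolynomialAction.

Section Span.
Variables (p : nat) (M : zmodType).
Hypothesis p_prime : prime p.
Hypothesis pM0 : forall v : M, v *+ p = 0.
Local Notation P := {poly 'F_p}.
Variable a : M -> M.
Hypothesis aD : {morph a : x y / x + y}.
Local Notation pact := (@pact p M a).

Definition in_span (I : finType) (h : I -> M) x :=
  exists c : I -> P, x = \sum_i pact (c i) (h i).

Definition in_sat (I : finType) (h : I -> M) x :=
  exists2 D : P, D != 0 & in_span h (pact D x).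

Definition pfree (I : finType) (g : I -> M) :=
  forall c : I -> P, \sum_i pact (c i) (g i) = 0 -> forall i, c i = 0.

Definition sumfam (I J : finType) (g : I -> M) (h : J -> M) (s : I + J) : M :=
  match s with inl i => g i | inr j => h j end.

Lemma pfree_reindex (I J : finType) (g : I -> M) (g' : J -> M) (f : J -> I) :
  bijective f -> g' =1 g \o f -> pfree g -> pfree g'.
Proof.
case=> fi fK fiK g'E free_g c c0 j.
have := free_g (c \o fi) _ (f j); rewrite /= fK; apply.
rewrite (reindex f) /=; last by exists fi => x _; [exact: fK | exact: fiK].
by rewrite -[RHS]c0; apply: eq_bigr => j' _; rewrite fK g'E.
Qed.

Lemma in_span_reindex (I J : finType) (g : I -> M) (g' : J -> M) (f : J -> I) x :
  bijective f -> g' =1 g \o f -> in_span g x -> in_span g' x.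
Proof.
case=> fi fK fiK g'E [c ->]; exists (c \o f).
rewrite (reindex f) /=; last by exists fi => y _; [exact: fK | exact: fiK].
by apply: eq_bigr => j _; rewrite g'E.
Qed.

Lemma in_span0 (I : finType) (h : I -> M) : in_span h 0.
Proof. by exists (fun _ => 0); rewrite big1 // => i _; rewrite pact0. Qed.

Lemma in_spanD (I : finType) (h : I -> M) x y :
  in_span h x -> in_span h y -> in_span h (x + y).
Proof.
move=> [c1 ->] [c2 ->]; exists (fun i => c1 i + c2 i).
by rewrite -big_split; apply: eq_bigr => i _; rewrite pactD.
Qed.

Lemma in_span_pact (I : finType) (h : I -> M) c x : in_span h x -> in_span h (pact c x).
Proof.
move=> [d ->]; exists (fun i => c * d i).
by rewrite pactv_sum //; apply: eq_bigr => i _; rewrite pactM.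
Qed.

Lemma in_span_sum (I J : finType) (h : I -> M) (F : J -> M) :
  (forall j, in_span h (F j)) -> in_span h (\sum_j F j).
Proof.
move=> hF; apply: (big_rec (in_span h)); first exact: in_span0.
by move=> j x _; apply: in_spanD.
Qed.

Lemma sum_pact_delta (I : finType) (h : I -> M) (c : P) i0 :
  \sum_i pact (if i == i0 then c else 0) (h i) = pact c (h i0).
Proof.
by rewrite (bigD1 i0) //= eqxx big1 ?addr0 // => i /negbTE ->; rewrite pact0.
Qed.

Lemma in_span_gen (I : finType) (h : I -> M) i : in_span h (h i).
Proof. by exists (fun j => if j == i then 1 else 0); rewrite sum_pact_delta pact1. Qed.

Lemma pfree_card_le_ord l k (h : 'I_l -> M) (g : 'I_k -> M) :
  pfree g -> (forall j, in_sat h (g j)) -> (k <= l)%N.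
Proof.
move=> free_g sat_g; rewrite leqNgt; apply/negP => lt_lk.
have sat_g' j : exists D : P,
    D != 0 /\ exists C : 'I_l -> P, pact D (g j) = \sum_i pact (C i) (h i).
  by have [D ? [C ?]] := sat_g j; exists D; split; last exists C.
have [D DP] := fin_all_exists sat_g'.
have [C DgC] := fin_all_exists (fun j => proj2 (DP j)).
have [w w_neq0 wC] := left_kernel_neq0 (\matrix_(j, i) C j i) lt_lk.
(* the combination [sum_j w_j D_j g_j] vanishes, which freeness forbids *)
suff w0 : forall j, w 0 j * D j = 0.
  case/eqP: w_neq0; apply/matrixP => x j; rewrite (ord1 x) mxE.
  by move/eqP: (w0 j); rewrite mulf_eq0 (negbTE (DP j).1) orbF => /eqP.
move=> j0; apply: (free_g (fun j => w 0 j * D j)); transitivity (\sum_j \sum_i pact (w 0 j * C j i) (h i)).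
  apply: eq_bigr => j _; rewrite pactM // DgC pactv_sum //.
  by apply: eq_bigr => i _; rewrite pactM.
rewrite exchange_big /=; apply: big1 => i _; rewrite -pact_sum //.
have := congr1 (fun N : 'rV_l => N 0 i) wC; rewrite !mxE => wCi.
suff -> : \sum_j w 0 j * C j i = 0 by rewrite pact0.
by rewrite -[RHS]wCi; apply: eq_bigr => j _; rewrite mxE.
Qed.

Lemma pfree_card_le (I J : finType) (h : I -> M) (g : J -> M) :
  pfree g -> (forall j, in_sat h (g j)) -> (#|J| <= #|I|)%N.
Proof.
move=> free_g sat_g.
apply: (@pfree_card_le_ord _ _ (h \o enum_val) (g \o enum_val)).
  exact: pfree_reindex (@enum_val_bij J) _ free_g.
move=> j; have [D D_neq0 Dg] := sat_g (enum_val j).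
by exists D => //; apply: in_span_reindex (@enum_val_bij I) _ Dg.
Qed.

Lemma in_sat_of_not_pfree (I : finType) (h : I -> M) x :
  pfree h -> ~ pfree (sumfam h (fun _ : 'I_1 => x)) -> in_sat h x.
Proof.
move=> free_h not_free; apply: NNPP => not_sat; apply: not_free => c.
rewrite big_sumType /= big_ord1 => c0.
have [cx0|cx_neq0] := eqVneq (c (inr ord0)) 0.
  move: c0; rewrite cx0 pact0 addr0 => /free_h c0.
  by case=> [i|j]; [exact: c0 | rewrite (ord1 j)].
case: not_sat; exists (c (inr ord0)) => //; exists (fun i => - c (inl i)).
move/eqP: c0; rewrite addrC addr_eq0 => /eqP ->; rewrite -sumrN.
by apply: eq_bigr => i _; rewrite pactN.
Qed.

Lemma pfree_extend1 (I L : finType) (B : I -> M) (H : L -> M) :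
  pfree B -> pfree H -> (#|I| < #|L|)%N ->
  exists w, pfree (sumfam B (fun _ : 'I_1 => w)).
Proof.
move=> free_B free_H; rewrite ltnNge => /negP not_le; apply: NNPP => no_w; apply: not_le.
apply: (pfree_card_le free_H) => j; apply: (in_sat_of_not_pfree free_B) => free_Bj.
by apply: no_w; exists (H j).
Qed.

Lemma pfree_extend (L : finType) (H : L -> M) : pfree H ->
  forall q (I : finType) (B : I -> M), pfree B -> (#|I| + q <= #|L|)%N ->
  exists E : 'I_q -> M, pfree (sumfam B E).
Proof.
move=> free_H; elim=> [|q IH] I B free_B le_card.
  exists (fun _ => 0) => c; rewrite big_sumType /= big_ord0 addr0 => /free_B c0.
  by case=> [i|[]].
have [w free_Bw] : exists w, pfree (sumfam B (fun _ : 'I_1 => w)).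
  by apply: pfree_extend1 free_B free_H _; apply: leq_trans le_card; rewrite addnS ltnS leq_addr.
have [E free_BwE] : exists E : 'I_q -> M, pfree (sumfam (sumfam B (fun _ : 'I_1 => w)) E).
  by apply: IH free_Bw _; rewrite card_sum card_ord -addnA add1n.
exists (fun j => if unlift ord0 j is Some j' then E j' else w).
pose f (s : I + 'I_q.+1) : (I + 'I_1) + 'I_q := match s with
  | inl i => inl (inl i)
  | inr j => if unlift ord0 j is Some j' then inr j' else inl (inr ord0) end.
pose f' (s : (I + 'I_1) + 'I_q) : I + 'I_q.+1 := match s with
  | inl (inl i) => inl i | inl (inr _) => inr ord0 | inr j' => inr (lift ord0 j') end.
have f_bij : bijective f.
  exists f'; first by case=> [i|j] //=; case: (unliftP ord0 j) => [j'|] ->.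
  by case=> [[i|x]|j'] //=; [rewrite (ord1 x) unlift_none | rewrite liftK].
apply: (pfree_reindex f_bij _ free_BwE).
by case=> [i|j] //=; case: (unliftP ord0 j).
Qed.

Lemma pfree_coef (IG IO : finType) (G : IG -> M) (O : IO -> M) :
  pfree (sumfam G O) -> forall cG cO cO',
  \sum_i pact (cG i) (G i) + \sum_o pact (cO o) (O o) = \sum_o pact (cO' o) (O o) ->
  (forall i, cG i = 0) /\ (forall o, cO o = cO' o).
Proof.
move=> free_GO cG cO cO' eq_c.
have := free_GO (fun s => match s with inl i => cG i | inr o => cO o - cO' o end).
rewrite big_sumType /=.
under [X in _ + X]eq_bigr do rewrite pactB //.
rewrite sumrB addrA eq_c subrr => /(_ erefl) c0.
by split=> [i|o]; [exact: (c0 (inl i)) | apply/eqP; rewrite -subr_eq0 (c0 (inr o))].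
Qed.

End Span.

Section CompXn.
Variables (R : nzRingType) (b : nat).
Implicit Types (F : 'I_b -> {poly R}) (f : {poly R}).

Lemma coef_sum_comp_Xn F n (j0 : 'I_b) :
  (\sum_j (F j \Po 'X^b) * 'X^j)`_(n * b + j0) = (F j0)`_n.
Proof.
have b_gt0 : (0 < b)%N by apply: leq_ltn_trans (ltn_ord j0).
rewrite coef_sum (bigD1 j0) //= big1 ?addr0 => [|j neq_jj0].
  by rewrite coefMXn ltnNge leq_addl /= addnK coef_comp_poly_Xn // dvdn_mull // mulnK.
rewrite coefMXn; case: ltnP => // le_j.
rewrite coef_comp_poly_Xn //; case: ifP => // /dvdnP [m Em]; case/eqP: neq_jj0.
apply: val_inj => /=; have : (n * b + j0 = m * b + j)%N by rewrite -Em subnK.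
by move/(congr1 (modn^~ b)); rewrite !modnMDl !modn_small.
Qed.

Lemma sum_comp_Xn_eq0 F : \sum_j (F j \Po 'X^b) * 'X^j = 0 -> forall j, F j = 0.
Proof. by move=> F0 j; apply/polyP => n; rewrite coef0 -(coef_sum_comp_Xn F n j) F0 coef0. Qed.

Lemma exists_sum_comp_Xn f : (0 < b)%N ->
  exists F : 'I_b -> {poly R}, f = \sum_j (F j \Po 'X^b) * 'X^j.
Proof.
move=> b_gt0; exists (fun j => \poly_(n < size f) f`_(n * b + j)).
apply/polyP => i; have Ei : i = (i %/ b * b + Ordinal (ltn_pmod i b_gt0))%N by rewrite /= -divn_eq.
rewrite [in RHS]Ei coef_sum_comp_Xn coef_poly -Ei; case: ltnP => // le_f.
rewrite nth_default //; apply: leq_trans le_f _.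
by rewrite {2}Ei; apply: leq_trans (leq_addr _ _); rewrite leq_pmulr.
Qed.

End CompXn.

(* pigeonhole on the residues of the powers of [X^b] modulo [D] *)
Lemma dvdp_comp_Xn (F : finFieldType) (D : {poly F}) b :
  D != 0 -> exists2 Q : {poly F}, Q != 0 & D %| Q \Po 'X^b.
Proof.
move=> D_neq0; pose d := size D.
pose res (i : 'I_#|{: 'rV[F]_d}|.+1) : 'rV[F]_d := \row_(k < d) ('X^b ^+ i %% D)`_k.
have /injectivePn [i [j neq_ij res_ij]] : ~~ injectiveb res.
  by apply/injectiveP => /leq_card; rewrite card_ord ltnn.
have Eij : 'X^b ^+ i %% D = 'X^b ^+ j %% D.
  apply/polyP => k; case: (ltnP k d) => [lt_kd|le_dk].
    by have := congr1 (fun r : 'rV[F]_d => r 0 (Ordinal lt_kd)) res_ij; rewrite !mxE.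
  by rewrite !nth_default // (leq_trans _ le_dk) // ltnW // ltn_modp.
exists ('X^i - 'X^j).
  apply/eqP => /(congr1 (fun q : {poly F} => q`_i)).
  rewrite coefB !coefXn eqxx coef0; case: eqP => [/val_inj Eij'|_].
    by rewrite Eij' eqxx in neq_ij.
  by rewrite subr0 => /eqP; rewrite oner_eq0.
by rewrite comp_polyB !comp_Xn_poly /dvdp modpD modpN Eij subrr.
Qed.

Definition shifts (M : zmodType) (I : finType) (a : M -> M) (b : nat) (g : I -> M)
  (ij : I * 'I_b) : M := iter ij.2 a (g ij.1).
Arguments shifts {M I} a b g ij.

Section Shifts.
Variables (p : nat) (M : zmodType).
Hypothesis p_prime : prime p.
Hypothesis pM0 : forall v : M, v *+ p = 0.
Variable a : M -> M.
Hypothesis aD : {morph a : x y / x + y}.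
Variable b : nat.
Hypothesis b_gt0 : (0 < b)%N.
Local Notation ab := (iter b a).

Lemma pact_shifts (I : finType) (g : I -> M) (c : {poly 'F_p}) i (j : 'I_b) :
  pact ab c (shifts a b g (i, j)) = pact a ((c \Po 'X^b) * 'X^j) (g i).
Proof. by rewrite pactM // pactXn // pact_comp_Xn. Qed.

Lemma pfree_shifts (I : finType) (g : I -> M) :
  pfree p a g -> pfree p ab (shifts a b g).
Proof.
move=> free_g c c0 [i j]; apply: (sum_comp_Xn_eq0 (F := fun j => c (i, j))).
apply: (free_g (fun i => \sum_j (c (i, j) \Po 'X^b) * 'X^j)); rewrite -[RHS]c0.
under eq_bigr do rewrite pact_sum //.
by rewrite pair_bigA; apply: eq_bigr => -[i' j'] _; rewrite pact_shifts.
Qed.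

Lemma in_span_shifts (I : finType) (h : I -> M) x :
  in_span p a h x -> in_span p ab (shifts a b h) x.
Proof.
have abD := morphD_iter aD b.
move=> [c ->]; apply: in_span_sum => // i.
have [F ->] := exists_sum_comp_Xn (c i) b_gt0; rewrite pact_sum //.
apply: in_span_sum => // j; rewrite -pact_shifts //.
exact: in_span_pact (in_span_gen p ab (shifts a b h) (i, j)).
Qed.

Lemma in_sat_shifts (I : finType) (h : I -> M) x :
  in_sat p a h x -> in_sat p ab (shifts a b h) x.
Proof.
move=> [D D_neq0 Dx]; have [Q Q_neq0 /dvdpP [Q' EQ]] := dvdp_comp_Xn b D_neq0.
exists Q => //; apply: in_span_shifts; rewrite -pact_comp_Xn // EQ pactM //.
exact: in_span_pact.
Qed.

End Shifts.

Section Rank.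
Variables (p : nat) (M : zmodType).
Hypothesis p_prime : prime p.
Hypothesis pM0 : forall v : M, v *+ p = 0.
Variables a ai : M -> M.
Hypothesis aD : {morph a : x y / x + y}.
Hypothesis aiK : cancel ai a.

Lemma lindep_pfree k (g : 'I_k -> M) : lindep p a ai g -> pfree p a g.
Proof. by move=> free_g c; apply: (free_g (fun j => (0%N, c j))). Qed.

(* multiplying a Laurent relation by a large power of [x] clears the denominators *)
Lemma pfree_lindep k (g : 'I_k -> M) : pfree p a g -> lindep p a ai g.
Proof.
move=> free_g c c0 i; pose K := \max_(j < k) (c j).1.
have le_cK j : ((c j).1 <= K)%N by apply: (leq_bigmax j).
suff /free_g/(_ i)/eqP : \sum_j pact a ((c j).2 * 'X^(K - (c j).1)) (g j) = 0.
  by rewrite mulf_eq0 expf_eq0 polyX_eq0 andbF orbF => /eqP.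
transitivity (iter K a (\sum_j lact a ai (c j) (g j))); last first.
  by rewrite c0 (morphD_0 (morphD_iter aD K)).
rewrite (morphD_sum (morphD_iter aD K)); apply: eq_bigr => j _.
rewrite lactE -{2}(subnK (le_cK j)) iterD (iter_cancel aiK) iter_pact //.
Qed.

Lemma has_rank_pfree S r : has_rank p a ai S r ->
  exists2 g : 'I_r -> M, forall i, S (g i) & pfree p a g.
Proof. by move=> [[g [Sg free_g]] _]; exists g => //; apply: lindep_pfree. Qed.

Lemma has_rank_card_le S r (I : finType) (g : I -> M) : has_rank p a ai S r ->
  (forall i, S (g i)) -> pfree p a g -> (#|I| <= r)%N.
Proof.
move=> [_ rank_max] Sg free_g; apply: (rank_max _ (g \o enum_val)) => [i|]; first exact: Sg.
by apply/pfree_lindep; apply: (pfree_reindex _ _ free_g) => //; apply: enum_val_bij.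
Qed.

Lemma has_rank_in_sat S r (g : 'I_r -> M) : has_rank p a ai S r ->
  (forall i, S (g i)) -> pfree p a g -> forall x, S x -> in_sat p a g x.
Proof.
move=> rank_S Sg free_g x Sx; apply: in_sat_of_not_pfree => // free_gx.
suff /(has_rank_card_le rank_S)/(_ free_gx) : forall i, S (sumfam g (fun _ : 'I_1 => x) i).
  by rewrite card_sum !card_ord addn1 ltnn.
by case.
Qed.

Lemma has_rank_of_basis S (I : finType) (g h : I -> M) :
  (forall i, S (g i)) -> pfree p a g -> (forall x, S x -> in_sat p a h x) ->
  has_rank p a ai S #|I|.
Proof.
move=> Sg free_g sat_h; split.
  exists (g \o enum_val); split=> [i|]; first exact: Sg.
  by apply/pfree_lindep; apply: (pfree_reindex _ _ free_g) => //; apply: enum_val_bij.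
move=> k g' Sg' /lindep_pfree free_g'.
by have := pfree_card_le p_prime pM0 aD free_g' (fun j => sat_h _ (Sg' j)); rewrite card_ord.
Qed.

End Rank.

Section Periods.
Variable M : zmodType.
Implicit Types (f g s t : M -> M) (U W : M -> Prop).

Lemma img_eq_comp f g U : img_eq f U -> img_eq g U -> img_eq (f \o g) U.
Proof.
move=> [fU fU'] [gU gU']; split=> [u Uu|m Um]; first exact/fU/gU.
have [u1 [Uu1 <-]] := fU' m Um; have [u2 [Uu2 <-]] := gU' u1 Uu1.
by exists u2.
Qed.

Lemma img_eq_iter_mul s U e : img_eq (iter e s) U -> forall j, img_eq (iter (j * e) s) U.
Proof.
move=> sU; elim=> [|j IH]; first by split=> [|m Um] //; exists m.
have [fU fU'] := img_eq_comp sU IH; split=> [u Uu|m Um].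
  by rewrite mulSn iterD; apply: fU.
by have [u [Uu Eu]] := fU' m Um; exists u; rewrite mulSn iterD.
Qed.

Lemma img_eq_iterDl s U e1 e2 :
  img_eq (iter (e1 + e2) s) U -> img_eq (iter e2 s) U -> img_eq (iter e1 s) U.
Proof.
move=> [fU fU'] [gU gU']; split=> [u Uu|m Um].
  by have [u' [Uu' <-]] := gU' u Uu; rewrite -iterD; apply: fU.
have [u [Uu <-]] := fU' m Um; exists (iter e2 s u); split; first exact: gU.
by rewrite -iterD.
Qed.

Lemma is_e_dvdn s U e e' : is_e s U e -> (0 < e')%N -> img_eq (iter e' s) U -> (e %| e')%N.
Proof.
move=> [e_gt0 [eU e_min]] e'_gt0 e'U.
have rem_U : img_eq (iter (e' %% e) s) U.
  apply: (img_eq_iterDl (e2 := (e' %/ e * e)%N)); last exact: img_eq_iter_mul.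
  by rewrite addnC -divn_eq.
rewrite /dvdn eqn0Ngt; apply/negP => rem_gt0.
exact: (e_min _ rem_gt0 (ltn_pmod e' e_gt0) rem_U).
Qed.

Lemma not_img_eq_witness f g U : cancel f g -> cancel g f -> ~ img_eq f U ->
  exists2 w, ~ U w & forall W, (forall u, U u -> W u) -> img_eq f W -> W w.
Proof.
move=> fK gK not_fU.
have [fU|not_fU'] := classic (forall u, U u -> U (f u)); last first.
  have [u Hu] := not_all_ex_not _ _ not_fU'.
  have [Uu not_Ufu] := imply_to_and _ _ Hu.
  by exists (f u) => [|W UW [fW _]]; last exact/fW/UW.
have [gU|not_gU] := classic (forall m, U m -> U (g m)).
  by case: not_fU; split=> // m Um; exists (g m); split; [exact: gU | exact: gK].
have [m Hm] := not_all_ex_not _ _ not_gU.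
have [Um not_Ugm] := imply_to_and _ _ Hm.
exists (g m) => [|W UW [_ fW']] //; have [u [Wu <-]] := fW' m (UW _ Um).
by rewrite fK.
Qed.

Lemma eventually_not_img_eq s t U (Ws : nat -> M -> Prop) n :
  cancel s t -> cancel t s -> (forall m u, U u -> Ws m u) ->
  (forall v, ~ U v -> exists K, forall m, (K <= m)%N -> ~ Ws m v) ->
  exists K, forall e', (e' < n)%N -> ~ img_eq (iter e' s) U ->
    forall m, (K <= m)%N -> ~ img_eq (iter e' s) (Ws m).
Proof.
move=> sK tK UWs Ws_cvg; elim: n => [|n [K IH]]; first by exists 0%N.
have [nU|not_nU] := classic (img_eq (iter n s) U).
  exists K => e'; rewrite ltnS leq_eqVlt => /orP[/eqP -> //|]; exact: IH.
have [w not_Uw Ww] := not_img_eq_witness (iter_cancel sK n) (iter_cancel tK n) not_nU.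
have [Kw Kw_Ws] := Ws_cvg w not_Uw.
exists (maxn K Kw) => e'; rewrite ltnS leq_eqVlt => /orP[/eqP -> _ m|lt_e'n not_e'U m].
  by rewrite geq_max => /andP[_ /Kw_Ws not_Wsw] nWs; exact/not_Wsw/(Ww _ (UWs m)).
by rewrite geq_max => /andP[/(IH _ lt_e'n not_e'U)].
Qed.

Lemma is_e_mul s U W e b : is_e s U e -> (0 < b)%N -> img_eq (iter (e * b) s) W ->
  (forall j, (0 < j < b)%N -> ~ img_eq (iter (e * j) s) W) ->
  (forall e', (0 < e' < e * b)%N -> ~ img_eq (iter e' s) U -> ~ img_eq (iter e' s) W) ->
  is_e s W (e * b).
Proof.
move=> eU b_gt0 ebW not_ejW not_U_W; have e_gt0 := eU.1.
split; first by rewrite muln_gt0 e_gt0.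
split=> // e' e'_gt0 lt_e'_eb e'W.
have [e'U|not_e'U] := classic (img_eq (iter e' s) U); last first.
  by apply: (not_U_W e') => //; rewrite e'_gt0.
have /dvdnP [j Ee'] := is_e_dvdn eU e'_gt0 e'U.
by apply: (not_ejW j); [apply/andP; split; nia | rewrite mulnC -Ee'].
Qed.

End Periods.

Section XsubC1.
Variable F : fieldType.

Lemma XsubC1_ndvd_Xn K : ~~ (('X - 1%:P : {poly F}) %| 'X^K).
Proof. by rewrite dvdp_XsubCl rootE hornerXn expr1n oner_eq0. Qed.

Lemma XsubC1_dvd_mulXn_eq0 (q : {poly F}) m K :
  ('X - 1%:P) ^+ m %| q * 'X^K -> (size q <= m)%N -> q = 0.
Proof.
have cop : coprimep (('X - 1%:P : {poly F}) ^+ m) 'X^K.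
  apply: coprimep_expl; apply: coprimep_expr.
  by rewrite coprimep_sym coprimep_XsubC rootE hornerX oner_eq0.
rewrite Gauss_dvdpl // => dvd_q le_qm; apply/eqP; apply: contraTT le_qm => q_neq0.
by rewrite -ltnNge -[m.+1](size_exp_XsubC m (1 : F)) dvdp_leq.
Qed.

End XsubC1.

Section WeightedSpan.
Variables (p : nat) (M : zmodType).
Hypothesis p_prime : prime p.
Hypothesis pM0 : forall v : M, v *+ p = 0.
Local Notation P := {poly 'F_p}.
Variables z tz : M -> M.
Hypothesis zD : {morph z : x y / x + y}.
Hypothesis zK : cancel z tz.
Hypothesis tzK : cancel tz z.
Local Notation pact := (@pact p M z).
Variable U : M -> Prop.
Hypothesis U_subgroup : add_subgroup U.
Hypothesis zU : img_eq z U.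
Variables (IG IO : finType) (G : IG -> M) (O : IO -> M).
Hypothesis free_GO : pfree p z (sumfam G O).
Hypothesis U_G : forall i, U (G i).
Hypothesis U_sat_G : forall u, U u -> in_sat p z G u.

(* the [z]-saturation of [U + sum_o F_p[z] rho_o O_o]; the subgroups [U_m] are of this form *)
Definition wspan (rho : IO -> P) x := exists K u (c : IO -> P),
  U u /\ iter K z x = u + \sum_o pact (c o * rho o) (O o).

Lemma iter_z_U K u : U u -> U (iter K z u).
Proof. by elim: K => //= K IH /IH; apply: zU.1. Qed.

Lemma iter_tz_U K u : U u -> U (iter K tz u).
Proof.
elim: K => //= K IH /IH; have [_ zU'] := zU.
by move=> /zU' [u' [Uu' <-]]; rewrite zK.
Qed.

Section FixedWeight.
Variable rho : IO -> P.

Lemma wspan_sub u : U u -> wspan rho u.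
Proof.
by exists 0%N, u, (fun _ => 0); split; rewrite //= big1 ?addr0 // => o _; rewrite mul0r pact0.
Qed.

Lemma wspan_gen o : wspan rho (pact (rho o) (O o)).
Proof.
exists 0%N, 0, (fun o' => if o' == o then 1 else 0); split; first exact: U_subgroup.1.
rewrite add0r -(sum_pact_delta _ _ _ o); apply: eq_bigr => o' _.
by case: eqP => [->|_]; rewrite ?mul1r ?mul0r.
Qed.

Lemma wspan_subgroup : add_subgroup (wspan rho).
Proof.
have [U0 [UD UN]] := U_subgroup; have zKD K := morphD_iter zD K.
split; first exact: wspan_sub.
split=> [x1 x2 [K1 [u1 [c1 [Uu1 E1]]]] [K2 [u2 [c2 [Uu2 E2]]]] | x [K [u [c [Uu E]]]]].
  exists (K1 + K2)%N, (iter K2 z u1 + iter K1 z u2), (fun o => c1 o * 'X^K2 + c2 o * 'X^K1).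
  split; first by apply: UD; apply: iter_z_U.
  rewrite zKD {1}addnC !iterD E1 E2 !zKD !(morphD_sum (zKD _)) addrACA -big_split.
  congr (_ + _); apply: eq_bigr => o _.
  by rewrite /= !iter_pact // mulrDl pactD // !(mulrAC _ (rho o)).
exists K, (- u), (fun o => - c o); split; first exact: UN.
rewrite (morphD_N (zKD K)) E opprD -sumrN; congr (_ + _).
by apply: eq_bigr => o _; rewrite mulNr pactN.
Qed.

Lemma wspan_img_eq : img_eq z (wspan rho).
Proof.
split=> x [K [u [c [Uu E]]]]; last first.
  by exists (tz x); split; [exists K.+1, u, c; rewrite iterSr tzK | exact: tzK].
exists K, (z u), (fun o => c o * 'X); split; first exact: zU.1.
rewrite -iterSr iterS E zD (morphD_sum zD); congr (_ + _).
by apply: eq_bigr => o _; rewrite -pactMX // mulrAC.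
Qed.

Lemma pact_wspan_repr x K u c (D : P) (a : IG -> P) :
  iter K z x = u + \sum_o pact (c o * rho o) (O o) ->
  pact D u = \sum_i pact (a i) (G i) ->
  pact (D * 'X^K) x = \sum_i pact (a i) (G i) + \sum_o pact (D * (c o * rho o)) (O o).
Proof.
move=> Ex Ea; rewrite pactM // pactXn // Ex pact_morphD // Ea pactv_sum //.
by congr (_ + _); apply: eq_bigr => o _; rewrite [RHS]pactM.
Qed.

Lemma wspan_multiple x : wspan rho x -> exists K (D : P) (a : IG -> P) (c : IO -> P),
  D != 0 /\ pact (D * 'X^K) x =
           \sum_i pact (a i) (G i) + \sum_o pact (D * (c o * rho o)) (O o).
Proof.
move=> [K [u [c [Uu Ex]]]]; have [D D_neq0 [a Ea]] := U_sat_G Uu.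
by exists K, D, a, c; split=> //; apply: pact_wspan_repr Ex Ea.
Qed.

Lemma wspan_neq o : rho o != 0 -> wspan rho <> U.
Proof.
move=> rho_neq0 EU; have /U_sat_G [D D_neq0 [a Ea]] : U (pact (rho o) (O o)).
  by rewrite -EU; exact: wspan_gen.
have := pfree_coef p_prime pM0 free_GO (cG := a) (cO := fun _ => 0)
  (cO' := fun o' => if o' == o then D * rho o else 0).
case=> [|_ /(_ o)].
  by rewrite sum_pact_delta pactM // -Ea big1 ?addr0 // => o' _; rewrite pact0.
by rewrite eqxx => /esym/eqP; rewrite mulf_eq0 (negbTE D_neq0) (negbTE rho_neq0).
Qed.

Lemma wspan_not_img_eq (f : M -> M) o1 o2 : {morph f : x y / x + y} ->
  (forall x, f (z x) = z (f x)) -> f (O o1) = O o2 ->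
  (forall K, ~~ (rho o2 %| rho o1 * 'X^K)) -> ~ img_eq f (wspan rho).
Proof.
move=> fD fz fO ndvd [fW _].
have := fW _ (wspan_gen o1); rewrite pact_commute // fO.
move=> /wspan_multiple [K [D [a [c [D_neq0 E]]]]].
have := pfree_coef p_prime pM0 free_GO (cG := a)
  (cO := fun o => D * (c o * rho o)) (cO' := fun o => if o == o2 then D * 'X^K * rho o1 else 0).
case=> [|_ /(_ o2)]; first by rewrite sum_pact_delta pactM // E.
rewrite eqxx => Ec; case/negP: (ndvd K); apply/dvdpP; exists (c o2).
by apply: (mulfI D_neq0); rewrite mulrA Ec; ring.
Qed.

Lemma sum_support (F : IO -> M) : (forall o, rho o = 0 -> F o = 0) ->
  \sum_o F o = \sum_(s : {o | rho o != 0}) F (val s).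
Proof.
move=> F0; rewrite (bigID (fun o => rho o != 0)) /= [X in _ + X]big1 ?addr0; last first.
  by move=> o /negbNE/eqP; apply: F0.
exact: (big_sub (fun o => rho o != 0) F).
Qed.

Lemma wspan_rank : has_rank p z tz (wspan rho) (#|IG| + #|[pred o | rho o != 0]|).
Proof.
rewrite -card_sig -card_sum.
apply: (has_rank_of_basis p_prime pM0 zD tzK (g := sumfam G (fun s => pact (rho (val s)) (O (val s))))
  (h := sumfam G (fun s : {o | rho o != 0} => O (val s)))).
- by case=> [i|s] /=; [apply: wspan_sub | apply: wspan_gen].
- move=> c c0.
  have := pfree_coef p_prime pM0 free_GO (cG := fun i => c (inl i))
    (cO := fun o => if insub o is Some s then c (inr s) * rho o else 0) (cO' := fun _ => 0).
  case=> [|cG0 cO0 [i|s]]; last 2 first.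
  + exact: cG0.
  + by move/eqP: (cO0 (val s)); rewrite valK mulf_eq0 (negbTE (valP s)) orbF => /eqP.
  rewrite [RHS]big1 => [|o _]; last exact: pact0.
  rewrite sum_support => [|o rho0]; last by case: insub => [s|]; rewrite ?rho0 ?mulr0 pact0.
  rewrite -[RHS]c0 big_sumType /=; congr (_ + _).
  by apply: eq_bigr => s _; rewrite valK pactM.
- move=> x /wspan_multiple [K [D [a [c [D_neq0 E]]]]].
  exists (D * 'X^K); first by rewrite mulf_neq0 // monic_neq0 // monicXn.
  exists (fun s => match s with inl i => a i | inr s => D * (c (val s) * rho (val s)) end).
  rewrite E big_sumType /= sum_support // => o ->.
  by rewrite !mulr0 pact0.
Qed.

End FixedWeight.

Lemma wspan_notin_of_pfree rho v :
  pfree p z (sumfam (sumfam G O) (fun _ : 'I_1 => v)) -> ~ wspan rho v.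
Proof.
move=> free_v /wspan_multiple [K [D [a [c [D_neq0 E]]]]].
pose cv (s : (IG + IO) + 'I_1) : P := match s with
  | inl (inl i) => - a i | inl (inr o) => - (D * (c o * rho o)) | inr _ => D * 'X^K end.
suff /free_v/(_ (inr ord0))/eqP : \sum_s pact (cv s) (sumfam (sumfam G O) (fun _ => v) s) = 0.
  by rewrite mulf_eq0 (negbTE D_neq0) expf_eq0 polyX_eq0 andbF.
rewrite !big_sumType big_ord1 /= E.
under eq_bigr do rewrite pactN //.
under [X in _ + X + _]eq_bigr do rewrite pactN //.
by rewrite !sumrN -opprD addNr.
Qed.

(* if [v] depends on [G] and [O], the [O]-coordinates of a multiple of [v] are fixed
   polynomials, which are not divisible by [(X - 1)^m] once [m] is large *)
Lemma wspan_notin_of_in_sat v : ~ U v -> in_sat p z (sumfam G O) v ->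
  exists N, forall m, (N <= m)%N ->
    forall rho, (forall o, ('X - 1%:P) ^+ m %| rho o) -> ~ wspan rho v.
Proof.
move=> not_Uv [D' D'_neq0 [a' Ea']].
exists (\max_o size (a' (inr o))) => m le_Nm rho rho_dvd [K [u [c [Uu Ev]]]].
have [D D_neq0 [a Ea]] := U_sat_G Uu; have E := pact_wspan_repr Ev Ea.
have E' : \sum_i pact (D * 'X^K * a' (inl i)) (G i) + \sum_o pact (D * 'X^K * a' (inr o)) (O o) =
    \sum_i pact (D' * a i) (G i) + \sum_o pact (D' * (D * (c o * rho o))) (O o).
  transitivity (pact (D * 'X^K) (pact D' v)).
    rewrite Ea' pactv_sum // big_sumType /=.
    by congr (_ + _); apply: eq_bigr => i _; rewrite pactM.
  rewrite -pactM // mulrC pactM // E pact_morphD // !pactv_sum //.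
  by congr (_ + _); apply: eq_bigr => i _; rewrite [RHS]pactM.
have := pfree_coef p_prime pM0 free_GO (cG := fun i => D * 'X^K * a' (inl i) - D' * a i)
  (cO := fun o => D * 'X^K * a' (inr o)) (cO' := fun o => D' * (D * (c o * rho o))).
case=> [|_ EO].
  under eq_bigr do rewrite pactB //.
  by rewrite sumrB addrAC E' addrAC subrr add0r.
have a'0 o : a' (inr o) = 0.
  apply: (@XsubC1_dvd_mulXn_eq0 _ _ m K); last first.
    exact: leq_trans (leq_bigmax (F := fun o => size (a' (inr o))) o) le_Nm.
  have /dvdpP [r Er] := rho_dvd o; apply/dvdpP; exists (D' * c o * r).
  by apply: (mulfI D_neq0); rewrite mulrA mulrAC EO Er; ring.
apply: not_Uv; rewrite -(iter_cancel zK K v); apply: iter_tz_U.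
rewrite Ev big1 ?addr0 // => o _; have := EO o.
rewrite a'0 mulr0 => /esym/eqP; rewrite !mulf_eq0 (negbTE D'_neq0) (negbTE D_neq0) /=.
by rewrite -mulf_eq0 => /eqP ->; rewrite pact0.
Qed.

Lemma wspan_eventually_notin v : ~ U v ->
  exists N, forall m, (N <= m)%N ->
    forall rho, (forall o, ('X - 1%:P) ^+ m %| rho o) -> ~ wspan rho v.
Proof.
move=> not_Uv; have [free_v|dep_v] := classic (pfree p z (sumfam (sumfam G O) (fun _ : 'I_1 => v))).
  by exists 0%N => m _ rho _; apply: wspan_notin_of_pfree.
exact: wspan_notin_of_in_sat not_Uv (in_sat_of_not_pfree p_prime pM0 free_GO dep_v).
Qed.

End WeightedSpan.

Lemma iter_mul (T : Type) (f : T -> T) e b : iter (e * b) f = iter b (iter e f).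
Proof. by apply: functional_extensionality => x; rewrite mulnC iterM. Qed.

Section Weight.
Variables (p b mb q : nat).
Hypothesis mb_gt0 : (0 < mb)%N.
Hypothesis le_mb_b : (mb <= b)%N.
Local Notation lin := ('X - 1%:P : {poly 'F_p}).

(* Since
   [x^(e j)] maps [O_(inl 0)] to [O_(inl j)], the jump of the exponent after [j = 0]
   keeps [x^(e j)], [0 < j < b], from stabilising the span; the zero weights for
   [j >= mb] tune the rank. *)
Definition weight m (o : 'I_b + 'I_q) : {poly 'F_p} :=
  match o with
  | inl j => if (j < mb)%N then lin ^+ (m + (nat_of_ord j != 0%N)) else 0
  | inr _ => lin ^+ m
  end.

Lemma lin_neq0 : lin != 0.
Proof. by rewrite monic_neq0 // monicXsubC. Qed.

Lemma weight_dvd m o : lin ^+ m %| weight m o.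
Proof. by case: o => [j|l] /=; rewrite ?dvdpp //; case: ifP; rewrite ?dvdp0 ?dvdp_exp2l ?leq_addr. Qed.

Lemma weight_first_neq0 m : weight m (inl (Ordinal (leq_trans mb_gt0 le_mb_b))) != 0.
Proof. by rewrite /= mb_gt0 expf_neq0 // lin_neq0. Qed.

Lemma weight_first_ndvd m (j : 'I_b) K : (0 < j)%N ->
  ~~ (weight m (inl j) %| weight m (inl (Ordinal (leq_trans mb_gt0 le_mb_b))) * 'X^K).
Proof.
move=> j_gt0; have XK_neq0 : 'X^K != 0 :> {poly 'F_p} by rewrite monic_neq0 // monicXn.
rewrite /= mb_gt0 addn0 -lt0n j_gt0; case: ifP => _.
  by rewrite addn1 exprS mulrC dvdp_mul2l ?expf_neq0 ?lin_neq0 // XsubC1_ndvd_Xn.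
by rewrite dvd0p mulf_neq0 // expf_neq0 // lin_neq0.
Qed.

Lemma card_weight_support m : #|[pred o | weight m o != 0]| = (mb + q)%N.
Proof.
have w_neq0 (j : 'I_b) : (weight m (inl j) != 0) = (j < mb)%N.
  by rewrite /=; case: ifP; rewrite ?eqxx // expf_neq0 // lin_neq0.
have sum1_ord n : (\sum_(i < n) 1 = n)%N by rewrite sum1_card card_ord.
rewrite -sum1_card big_sumType /= (eq_bigl _ _ w_neq0) [X in (_ + X)%N](eq_bigl xpredT).
  rewrite sum1_ord -[in RHS](sum1_ord mb); congr (_ + _)%N.
  exact: big_ord_narrow.
by move=> l; rewrite inE /= expf_neq0 // lin_neq0.
Qed.

End Weight.

Section AdaptedFamily.
Variables (p : nat) (M : zmodType).
Hypothesis p_prime : prime p.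
Hypothesis pM0 : forall v : M, v *+ p = 0.
Variable y : M -> M.
Hypothesis yD : {morph y : x x' / x + x'}.
Variables (b rU q : nat).

Lemma exists_adapted_family (g : 'I_rU -> M) (L L' : finType) (H : L -> M) (H' : L' -> M) :
  pfree p y g -> pfree p y H -> (rU < #|L|)%N ->
  pfree p (iter b y) H' -> (rU.+1 * b + q <= #|L'|)%N ->
  exists v (E : 'I_q -> M),
    pfree p (iter b y) (sumfam (shifts y b g) (sumfam (fun j : 'I_b => iter j y v) E)).
Proof.
move=> free_g free_H lt_rU_L free_H' le_L'.
have [v free_gv] : exists v, pfree p y (sumfam g (fun _ : 'I_1 => v)).
  by apply: (pfree_extend1 p_prime pM0 yD free_g free_H); rewrite card_ord.
have [E free_gvE] : exists E : 'I_q -> M,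
    pfree p (iter b y) (sumfam (shifts y b (sumfam g (fun _ : 'I_1 => v))) E).
  apply: (pfree_extend p_prime pM0 (morphD_iter yD b) free_H' (pfree_shifts p_prime pM0 yD (b := b) free_gv)).
  by rewrite card_prod card_sum !card_ord addn1.
exists v, E.
pose f (s : ('I_rU * 'I_b) + ('I_b + 'I_q)) : (('I_rU + 'I_1) * 'I_b) + 'I_q :=
  match s with
  | inl ij => inl (inl ij.1, ij.2) | inr (inl j) => inl (inr ord0, j) | inr (inr l) => inr l
  end.
pose f' (s : (('I_rU + 'I_1) * 'I_b) + 'I_q) : ('I_rU * 'I_b) + ('I_b + 'I_q) :=
  match s with
  | inl (inl i, j) => inl (i, j) | inl (inr _, j) => inr (inl j) | inr l => inr (inr l)
  end.
have f_bij : bijective f.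
  by exists f'; [case=> [[i j]|[j|l]] | case=> [[[i|x] j]|l] //=; rewrite (ord1 x)].
by apply: (pfree_reindex f_bij _ free_gvE); case=> [[i j]|[j|l]].
Qed.

End AdaptedFamily.

Lemma exists_tower_family (p : nat) (M : zmodType) (sigma tau : M -> M)
    (U : M -> Prop) (n e b rU q : nat) :
  prime p -> (forall v : M, v *+ p = 0) -> {morph sigma : x y / x + y} ->
  cancel tau sigma -> has_rank p sigma tau (fun _ => True) n ->
  has_rank p (iter e sigma) (iter e tau) U rU ->
  (rU < n * e)%N -> (rU.+1 * b + q <= n * (e * b))%N ->
  exists (g : 'I_rU -> M) (v : M) (E : 'I_q -> M),
    [/\ forall i, U (g i), forall u, U u -> in_sat p (iter e sigma) g u &
        pfree p (iter (e * b) sigma) (sumfam (shifts (iter e sigma) b g)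
                                        (sumfam (fun j : 'I_b => iter j (iter e sigma) v) E))].
Proof.
move=> p_prime pM0 sigmaD tauK rank_M rank_U lt_rU le_q.
have [h _ free_h] := has_rank_pfree rank_M.
have [g U_g free_g] := has_rank_pfree rank_U.
have free_h_e := pfree_shifts p_prime pM0 sigmaD (b := e) free_h.
have free_h_eb := pfree_shifts p_prime pM0 sigmaD (b := e * b) free_h.
rewrite iter_mul in free_h_eb.
have card_e : (rU < #|{: 'I_n * 'I_e}|)%N by rewrite card_prod !card_ord.
have card_eb : (rU.+1 * b + q <= #|{: 'I_n * 'I_(e * b)}|)%N by rewrite card_prod !card_ord.
have [v [E free_GO]] := exists_adapted_family p_prime pM0 (morphD_iter sigmaD e) free_g
  free_h_e card_e free_h_eb card_eb.
exists g, v, E; split=> // [u Uu|]; last by rewrite iter_mul.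
by have := has_rank_in_sat p_prime pM0 (morphD_iter sigmaD e) (iter_cancel tauK e) rank_U U_g free_g Uu.
Qed.

Section Tower.
Variables (p : nat) (M : zmodType) (sigma tau : M -> M).
Hypothesis p_prime : prime p.
Hypothesis pM0 : forall v : M, v *+ p = 0.
Hypothesis sigmaD : {morph sigma : x y / x + y}.
Hypothesis sigmaK : cancel sigma tau.
Hypothesis tauK : cancel tau sigma.
Variables (U : M -> Prop) (e b : nat).
Hypothesis U_subgroup : add_subgroup U.
Hypothesis eU : is_e sigma U e.
Hypothesis b_gt0 : (0 < b)%N.
Variables (rU mb q : nat) (g : 'I_rU -> M) (v : M) (E : 'I_q -> M).
Hypothesis mb_gt0 : (0 < mb)%N.
Hypothesis le_mb_b : (mb <= b)%N.
Hypothesis U_g : forall i, U (g i).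
Hypothesis U_sat_g : forall u, U u -> in_sat p (iter e sigma) g u.
Local Notation y := (iter e sigma).
Local Notation z := (iter (e * b) sigma).
Local Notation G := (shifts y b g).
Local Notation O := (sumfam (fun j : 'I_b => iter j y v) E).
Hypothesis free_GO : pfree p z (sumfam G O).
Local Notation tower m := (wspan z U O (weight p mb m)).

Let yD := morphD_iter sigmaD e.
Let zD := morphD_iter sigmaD (e * b).
Let zK := iter_cancel sigmaK (e * b).
Let tzK := iter_cancel tauK (e * b).

Let zU : img_eq z U.
Proof. by rewrite mulnC; exact: img_eq_iter_mul eU.2.1 b. Qed.

Let U_G i : U (G i).
Proof. exact: (iter_z_U eU.2.1 i.2 (U_g i.1)). Qed.

Let U_sat_G u : U u -> in_sat p z G u.
Proof. by move=> Uu; rewrite iter_mul; apply: in_sat_shifts (U_sat_g Uu). Qed.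

Lemma tower_subgroup m : add_subgroup (tower m).
Proof. exact: wspan_subgroup. Qed.

Lemma tower_sub m u : U u -> tower m u.
Proof. exact: wspan_sub. Qed.

Lemma tower_neq m : tower m <> U.
Proof. exact: (wspan_neq p_prime pM0 zD U_subgroup free_GO U_sat_G (weight_first_neq0 p q mb_gt0 le_mb_b m)). Qed.

Lemma tower_rank m :
  has_rank p z (iter (e * b) tau) (tower m) (rU * b + (mb + q)).
Proof.
have := wspan_rank p_prime pM0 zD tzK U_subgroup free_GO U_G U_sat_G (weight p mb m).
by rewrite card_prod !card_ord card_weight_support.
Qed.

Lemma tower_eventually_notin w : ~ U w -> exists N, forall m, (N <= m)%N -> ~ tower m w.
Proof.
move=> not_Uw; have [N notin] := wspan_eventually_notin p_prime pM0 zD zK zU free_GO U_sat_G not_Uw.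
by exists N => m le_Nm; apply: notin le_Nm _ (weight_dvd p mb m).
Qed.

Lemma tower_not_img_eq m j : (0 < j < b)%N -> ~ img_eq (iter (e * j) sigma) (tower m).
Proof.
case/andP=> j_gt0 lt_jb; pose o0 := inl (Ordinal (leq_trans mb_gt0 le_mb_b)) : 'I_b + 'I_q.
apply: (wspan_not_img_eq p_prime pM0 zD U_subgroup free_GO U_sat_G (o1 := o0) (o2 := inl (Ordinal lt_jb))).
- exact: morphD_iter.
- by move=> x; rewrite -!iterD addnC.
- by rewrite /= mulnC iterM.
- by move=> K; exact: (weight_first_ndvd p q mb_gt0 le_mb_b m (j := Ordinal lt_jb) K j_gt0).
Qed.

Lemma tower_is_e : exists K0, forall m, is_e sigma (tower (m + K0)) (e * b).
Proof.
have [K0 K0P] := eventually_not_img_eq (e * b) sigmaK tauK tower_sub tower_eventually_notin.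
exists K0 => m; apply: is_e_mul eU b_gt0 _ _ _.
- exact: wspan_img_eq.
- by move=> j; apply: tower_not_img_eq.
- by move=> e' /andP[_ lt_e'] not_U; apply: K0P lt_e' not_U _ (leq_addl _ _).
Qed.

Lemma tower_cvg K0 : set_cvg (fun m => tower (m + K0)) U.
Proof.
move=> w; have [Uw|not_Uw] := classic (U w).
  by exists 0%N => m _; split=> // _; apply: tower_sub.
have [N notin] := tower_eventually_notin not_Uw.
by exists N => m le_Nm; split=> // /(notin _ (leq_trans le_Nm (leq_addr _ _))).
Qed.

End Tower.

Theorem lemma6p21 (p : nat) (hp : prime p) (M : zmodType) (sigma tau : M -> M)
  (hadd : forall a b, sigma (a + b) = sigma a + sigma b)
  (hst : cancel sigma tau) (hts : cancel tau sigma)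
  (hchar : forall m : M, m *+ p = 0)
  (hfg : fin_gen p sigma tau)
  (n : nat) (hn : has_rank p sigma tau (fun _ => True) n)
  (U : M -> Prop) (hU : add_subgroup U)
  (e : nat) (he : is_e sigma U e)
  (rU : nat) (hrU : has_rank p (iter e sigma) (iter e tau) U rU)
  (hpos : (rU < n * e)%N)
  (b : nat) (hb : (0 < b)%N)
  (r' : nat) (hr' : (r' < (n * e - rU) * b)%N) :
  exists Us : nat -> M -> Prop,
    (forall m, add_subgroup (Us m) /\ (forall u, U u -> Us m u) /\ Us m <> U /\
       is_e sigma (Us m) (e * b) /\
       exists rk, has_rank p (iter (e * b) sigma) (iter (e * b) tau) (Us m) rk /\
                  (rk + r' = n * (e * b))%N) /\
    set_cvg Us U.
Proof.
pose k := ((n * e - rU) * b - r')%N; pose mb := minn k b; pose q := (k - mb)%N.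
have mb_gt0 : (0 < mb)%N by rewrite leq_min hb subn_gt0 hr'.
have le_mb_b : (mb <= b)%N := geq_minr k b.
have le_q : (rU.+1 * b + q <= n * (e * b))%N by rewrite /q /mb /k; nia.
have [g [v [E [U_g U_sat_g free_GO]]]] := exists_tower_family hp hchar hadd hts hn hrU hpos le_q.
have [K0 is_e_tower] := tower_is_e hp hchar hadd hst hts hU he hb mb_gt0 le_mb_b U_sat_g free_GO.
exists (fun m => wspan (iter (e * b) sigma) U (sumfam (fun j : 'I_b => iter j (iter e sigma) v) E)
  (weight p mb (m + K0))).
split=> [m /=|]; last exact: (tower_cvg hp hchar hadd hst he hb mb U_sat_g free_GO K0).
split; first exact: tower_subgroup.
split; first exact: tower_sub.
split; first exact: (tower_neq hp hchar hadd hU hb mb_gt0 le_mb_b U_sat_g free_GO).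
split; first exact: is_e_tower.
exists (rU * b + (mb + q))%N; split.
  exact: (tower_rank hp hchar hadd hts hU he hb le_mb_b U_g U_sat_g free_GO).
rewrite /q /mb /k; nia.
Qed.
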